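(* Let $G\in\mathcal{G}_3$ and let $e=(a,b)$ be an interior edge of $G$ of odd degree. Let $G'$ be obtained from $G$ by an edge cut at $e$. Then for every interior edge $f$ of $G$ which is an edge of the cycle $S(a)\cap S(b)$, the degree of $f$ in $G'$ equals its degree in $G$ plus one.
   Context: All graphs are finite simple graphs. For a vertex $x$, $S(x)$ is the subgraph induced by the neighbors of $x$. A graph is contractible if it is $K_1$, or, inductively, if there is a vertex $x$ with both $S(x)$ and the subgraph induced by $V\setminus\{x\}$ contractible. $\mathcal{G}_0$: graphs without edges; $\mathcal{S}_0$: those with two vertices; $\mathcal{B}_0$: those with one vertex. For $d\ge1$: $\mathcal{G}_d$ is the class of graphs in which every $S(x)$ lies in $\mathcal{S}_{d-1}\cup\mathcal{B}_{d-1}$; the boundary is the subgraph induced by vertices with $S(x)\in\mathcal{B}_{d-1}$, and the interior must be nonempty; $\mathcal{B}_d$: contractible graphs in $\mathcal{G}_d$ with boundary in $\mathcal{S}_{d-1}$; $\mathcal{S}_d$: non-contractible graphs in $\mathcal{G}_d$ such that removing any single vertex yields a graph in $\mathcal{B}_d$. For $G\in\mathcal{G}_3$ and an edge $e=(a,b)$, the degree of $e$ is the number of vertices of $S(a)\cap S(b)$; $e$ is interior if $S(a)\cap S(b)$ is a cycle graph. The edge cut at $e=(a,b)$ produces $G'$ by adding a new vertex $v$, deleting the edge $(a,b)$, and adding the edges $(a,v)$, $(b,v)$ and $(v,x_i)$ for every vertex $x_i$ of $S(a)\cap S(b)$. *)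

From mathcomp Require Import all_boot.
Set Implicit Arguments.
Unset Strict Implicit.
Unset Printing Implicit Defensive.

(* A finite simple graph is represented by a vertex set A : {set T} inside an
   ambient finite type T, together with an adjacency relation adj : rel T
   (assumed symmetric and irreflexive); the graph is the one induced by adj
   on A. *)

Section GraphClasses.
Variables (T : finType) (adj : rel T).

Definition nbr (A : {set T}) (x : T) : {set T} := [set y in A | adj x y].

Inductive contractible : {set T} -> Prop :=
| contr_K1 x : contractible [set x]
| contr_step (A : {set T}) x : x \in A -> contractible (nbr A x) ->
    contractible (A :\ x) -> contractible A.

Definition noedge (A : {set T}) : Prop :=
  forall x y, x \in A -> y \in A -> ~~ adj x y.

Definition Gstep (Sp Bp : {set T} -> Prop) (A : {set T}) : Prop :=
  (forall x, x \in A -> Sp (nbr A x) \/ Bp (nbr A x)) /\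
  (exists x, x \in A /\ Sp (nbr A x)).

Definition is_boundary (Bp : {set T} -> Prop) (A Bd : {set T}) : Prop :=
  forall x, x \in Bd <-> (x \in A /\ Bp (nbr A x)).

Definition Bstep (Sp Bp : {set T} -> Prop) (A : {set T}) : Prop :=
  contractible A /\ Gstep Sp Bp A /\
  exists Bd, is_boundary Bp A Bd /\ Sp Bd.

Definition Sstep (Sp Bp : {set T} -> Prop) (A : {set T}) : Prop :=
  ~ contractible A /\ Gstep Sp Bp A /\
  forall x, x \in A -> Bstep Sp Bp (A :\ x).

Fixpoint SBclass (d : nat) : ({set T} -> Prop) * ({set T} -> Prop) :=
  match d with
  | 0 => (fun A => noedge A /\ #|A| = 2, fun A => noedge A /\ #|A| = 1)
  | n.+1 => let SBn := SBclass n in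
      (Sstep SBn.1 SBn.2, Bstep SBn.1 SBn.2)
  end.

Definition Sclass d := (SBclass d).1.
Definition Bclass d := (SBclass d).2.

Definition Gclass (d : nat) (A : {set T}) : Prop :=
  match d with
  | 0 => noedge A
  | n.+1 => Gstep (Sclass n) (Bclass n) A
  end.

Definition is_edge (A : {set T}) (a b : T) : Prop :=
  [/\ a \in A, b \in A & adj a b].

Definition link (A : {set T}) (a b : T) : {set T} := nbr A a :&: nbr A b.

Definition edge_deg (A : {set T}) (a b : T) : nat := #|link A a b|.

Definition is_cycle_graph (C : {set T}) : Prop :=
  [/\ C != set0,
      forall x, x \in C -> #|nbr C x| = 2
    & forall x y, x \in C -> y \in C ->
        connect [rel u v | [&& u \in C, v \in C & adj u v]] x y].

Definition interior_edge (A : {set T}) (a b : T) : Prop :=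
  is_edge A a b /\ is_cycle_graph (link A a b).

End GraphClasses.

(* Edge cut at (a,b): the new graph lives on option T, the new vertex is None. *)
Definition cut_verts (T : finType) (A : {set T}) : {set option T} :=
  None |: [set Some x | x in A].

Definition cut_adj (T : finType) (adj : rel T) (A : {set T}) (a b : T)
  : rel (option T) :=
  fun u v => match u, v with
  | Some x, Some y => adj x y && ~~ (((x == a) && (y == b)) || ((x == b) && (y == a)))
  | None, Some y | Some y, None => [|| y == a, y == b | y \in link adj A a b]
  | None, None => false
  end.

From mathcomp Require Import all_boot.

(* The new vertex v of the cut is adjacent to every vertex of S(a) ∩ S(b), and
   for vertices of S(a) ∩ S(b), which differ from a and b, the cut changes no
   other adjacency.  Hence the link of an edge (c,d) of that cycle gains exactly
   the vertex v. *)

Section EdgeCut.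
Variables (T : finType) (adj : rel T) (A : {set T}) (a b : T).

Lemma cut_adj_Some x y :
  x != a -> x != b -> cut_adj adj A a b (Some x) (Some y) = adj x y.
Proof. by rewrite /cut_adj => /negbTE-> /negbTE->; rewrite andbT. Qed.

Lemma cut_adj_link_None x :
  x \in link adj A a b -> cut_adj adj A a b (Some x) None.
Proof. by move=> xL; rewrite /cut_adj xL !orbT. Qed.

Hypothesis adj_irr : irreflexive adj.

Lemma link_neq_ends x : x \in link adj A a b -> (x != a) && (x != b).
Proof.
rewrite /link /nbr !inE => /andP[/andP[_ adj_ax] /andP[_ adj_bx]].
by apply/andP; split; apply/eqP => x_end; [move: adj_ax | move: adj_bx];
  rewrite x_end adj_irr.
Qed.

Lemma link_cut_link c d :
  c \in link adj A a b -> d \in link adj A a b ->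
  link (cut_adj adj A a b) (cut_verts A) (Some c) (Some d)
  = None |: [set Some y | y in link adj A c d].
Proof.
move=> cL dL; have /andP[ca cb] := link_neq_ends _ cL.
have /andP[da db] := link_neq_ends _ dL.
apply/setP => -[y|]; rewrite /link /nbr /cut_verts !inE.
- by rewrite !cut_adj_Some // !(mem_imset _ _ Some_inj) !inE andbACA andbb.
- by rewrite !cut_adj_link_None.
Qed.

Lemma edge_deg_cut_link c d :
  c \in link adj A a b -> d \in link adj A a b ->
  edge_deg (cut_adj adj A a b) (cut_verts A) (Some c) (Some d)
  = (edge_deg adj A c d).+1.
Proof.
move=> cL dL; rewrite /edge_deg link_cut_link // cardsU1 (card_imset _ Some_inj).
by rewrite (_ : None \notin _) //; apply/imsetP => -[].
Qed.

End EdgeCut.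

Theorem mainTheorem12 (T : finType) (adj : rel T)
  (adj_sym : symmetric adj) (adj_irr : irreflexive adj)
  (A : {set T}) (HG : Gclass adj 3 A)
  (a b : T) (He : interior_edge adj A a b) (Hodd : odd (edge_deg adj A a b))
  (c d : T) (Hc : c \in link adj A a b) (Hd : d \in link adj A a b)
  (Hcd : adj c d) (Hf : interior_edge adj A c d) :
  edge_deg (cut_adj adj A a b) (cut_verts A) (Some c) (Some d)
  = (edge_deg adj A c d).+1.
Proof. exact: edge_deg_cut_link. Qed.
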